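(* Let $n\ge 2$, $\lambda\in[0,(n-1)^2/4]$, and let $h$, $d_0$ be as follows: $h:(0,\infty)\to\mathbb{R}$ solves $h''+(n-1)\tanh(d)h'=-\lambda h$, is positive and decreasing on $[d_0,\infty)$, and satisfies $h(d)<C_3e^{-rd}$ for $d>d_0$, where $r=\frac{n-1}{2}+\frac{n-1}{2}\sqrt{1-4\lambda/(n-1)^2}$. In the Poincaré ball model $B$, for $z\in\partial B$ and $\theta>0$ let $I=I(z,\theta,0)$ be the totally geodesic hyperball whose closure meets $\partial B$ exactly in the closed cap $\{y\in\partial B:\angle(y,z)\le\theta/2\}$, and let $w_I(x)=h(\sigma(x))/h(d_0)$, where $\sigma(x)$ is the hyperbolic distance from $x$ to $\partial I$ taken with positive sign on the side of $\partial I$ containing $0$. Then there exist constants $C_4>0$ and $\theta_1>0$ (independent of $z$) such that $$0<w_I(0)\le C_4\,\theta^{(n-1)/2}\quad\text{for all }0<\theta<\theta_1.$$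
   Context: The Poincaré ball model is $B=\{p\in\mathbb{R}^n:|p|<1\}$ with metric $\frac{4}{(1-|p|^2)^2}\delta_{ij}$ and ideal boundary $\partial B$; totally geodesic hyperballs are regions bounded by totally geodesic hyperspheres (Euclidean spheres orthogonal to $\partial B$ intersected with $B$). The function $x\mapsto h(\sigma(x))$ satisfies $-\Delta u=\lambda u$ where $\sigma$ ranges in $(0,\infty)$. *)

From Stdlib Require Import Reals Lra.
Open Scope R_scope.

(* Points of R^n are represented as functions nat -> R; only the
   coordinates 0..n-1 are ever used. *)
Definition pt := nat -> R.

Fixpoint sumn (k : nat) (f : nat -> R) : R :=
  match k with O => 0 | S k' => sumn k' f + f k' end.

Definition dot (n : nat) (x y : pt) : R := sumn n (fun i => x i * y i).
Definition vsub (x y : pt) : pt := fun i => x i - y i.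
Definition norm2 (n : nat) (x : pt) : R := dot n x x.
Definition enorm (n : nat) (x : pt) : R := sqrt (norm2 n x).
Definition origin : pt := fun _ => 0.

Definition inB (n : nat) (p : pt) : Prop := norm2 n p < 1.
Definition onDB (n : nat) (y : pt) : Prop := norm2 n y = 1.

(* Hyperbolic distance of the metric 4/(1-|p|^2)^2 delta_ij (closed form). *)
Definition arcosh (t : R) : R := ln (t + sqrt (t * t - 1)).
Definition hdist (n : nat) (x y : pt) : R :=
  arcosh (1 + 2 * norm2 n (vsub x y) / ((1 - norm2 n x) * (1 - norm2 n y))).

Definition angle (n : nat) (y z : pt) : R := acos (dot n y z).

(* A Euclidean sphere with centre c and radius rho > 0 orthogonal to dB:
   |c|^2 = 1 + rho^2. *)
Definition orth_sphere (n : nat) (c : pt) (rho : R) : Prop :=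
  0 < rho /\ norm2 n c = 1 + rho ^ 2.

Definition tg_hypersphere (n : nat) (c : pt) (rho : R) (p : pt) : Prop :=
  inB n p /\ enorm n (vsub p c) = rho.

Definition tg_hyperball (n : nat) (c : pt) (rho : R) (inner : bool) (p : pt) : Prop :=
  inB n p /\
  (if inner then enorm n (vsub p c) < rho else rho < enorm n (vsub p c)).

Definition in_closure (n : nat) (S : pt -> Prop) (y : pt) : Prop :=
  forall eps, 0 < eps -> exists p, S p /\ enorm n (vsub p y) < eps.

Definition is_hdist_to_set (n : nat) (S : pt -> Prop) (x : pt) (d : R) : Prop :=
  (forall p, S p -> d <= hdist n x p) /\
  (forall eps, 0 < eps -> exists p, S p /\ hdist n x p < d + eps).

Definition is_sigma (n : nat) (c : pt) (rho : R) (x : pt) (s : R) : Prop :=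
  exists d, is_hdist_to_set n (tg_hypersphere n c rho) x d /\
   (  ((enorm n (vsub x c) < rho <-> enorm n (vsub origin c) < rho) /\ s = d)
   \/ (~ (enorm n (vsub x c) < rho <-> enorm n (vsub origin c) < rho) /\ s = - d)).

(* The sphere bounding I is orthogonal to dB and cuts out the cap of angular
   radius theta/2; for theta < PI this forces I to be the inner region and
   cos(theta/2) sqrt(1 + rho^2) <= 1, so its Euclidean radius satisfies
   rho <= theta.  The origin lies outside that sphere, so sigma(0) is the
   hyperbolic distance from 0 to dI, and each point p of dI has
   1 - |p|^2 <= 2 rho, whence e^{-sigma(0)} <= 2 rho <= 2 theta.  For small
   theta this puts sigma(0) beyond d0, and the decay h(d) < C3 e^{-r d} with
   r >= (n-1)/2 gives h(sigma(0)) <= C3 (2 theta)^((n-1)/2). *)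

From Stdlib Require Import Reals Lra Psatz.
Open Scope R_scope.

Lemma sumn_ext k f g : (forall i, f i = g i) -> sumn k f = sumn k g.
Proof. intros H; induction k; simpl; [reflexivity | now rewrite IHk, H]. Qed.

Lemma sumn_lin k a b f g :
  sumn k (fun i => a * f i + b * g i) = a * sumn k f + b * sumn k g.
Proof. induction k; simpl; [ring | rewrite IHk; ring]. Qed.

Lemma sumn_ge0 k f : (forall i, 0 <= f i) -> 0 <= sumn k f.
Proof. intros H; induction k; simpl; [lra | specialize (H k); lra]. Qed.

Lemma sumn_two k f :
  (2 <= k)%nat -> (forall i, (2 <= i)%nat -> f i = 0) -> sumn k f = f 0%nat + f 1%nat.
Proof.
  intros Hk Hf; induction Hk; simpl; [ring | rewrite IHHk, (Hf m) by lia; ring].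
Qed.

Lemma norm2_ge0 n x : 0 <= norm2 n x.
Proof. apply sumn_ge0; intros; nra. Qed.

Lemma norm2_ext n x y : (forall i, x i = y i) -> norm2 n x = norm2 n y.
Proof. intros H; apply sumn_ext; intros; now rewrite H. Qed.

Lemma norm2_origin n : norm2 n origin = 0.
Proof. unfold norm2, dot, origin; induction n; simpl; [ring | rewrite IHn; ring]. Qed.

Lemma dot_sym n x y : dot n x y = dot n y x.
Proof. apply sumn_ext; intros; ring. Qed.

Lemma dot_lin n a b x y z :
  dot n (fun i => a * x i + b * y i) z = a * dot n x z + b * dot n y z.
Proof. unfold dot; rewrite <- sumn_lin; apply sumn_ext; intros; ring. Qed.

Lemma norm2_lin n a b x y :
  norm2 n (fun i => a * x i + b * y i)
  = a * a * norm2 n x + 2 * a * b * dot n x y + b * b * norm2 n y.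
Proof.
  unfold norm2; rewrite dot_lin, (dot_sym n x), (dot_sym n y), !dot_lin, (dot_sym n y x).
  ring.
Qed.

Lemma quadratic_nonneg_discriminant a b c :
  0 <= a -> (forall t, 0 <= a * t * t + 2 * b * t + c) -> b * b <= a * c.
Proof.
  intros Ha H.
  destruct (Req_dec a 0) as [Ha0 | Ha0].
  - destruct (Req_dec b 0) as [Hb0 | Hb0]; [subst; lra | exfalso].
    specialize (H (- (c + 1) / (2 * b))).
    assert (2 * b * (- (c + 1) / (2 * b)) = - (c + 1)) by (field; exact Hb0).
    subst a; lra.
  - specialize (H (- b / a)).
    assert (a * (- b / a) * (- b / a) + 2 * b * (- b / a) + c = (a * c - b * b) / a)
      by (field; exact Ha0).
    assert (0 <= (a * c - b * b) / a) as Hq by lra.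
    apply Rmult_le_compat_r with (r := a) in Hq; [|lra].
    unfold Rdiv in Hq; rewrite Rmult_assoc, Rinv_l in Hq by exact Ha0; lra.
Qed.

Lemma dot_le_enorm n x y : dot n x y <= enorm n x * enorm n y.
Proof.
  assert (Hcs : dot n x y * dot n x y <= norm2 n x * norm2 n y).
  { apply quadratic_nonneg_discriminant; [apply norm2_ge0 |]; intros t.
    pose proof (norm2_ge0 n (fun i => t * x i + 1 * y i)) as H.
    rewrite norm2_lin in H; lra. }
  unfold enorm; rewrite <- sqrt_mult by apply norm2_ge0.
  apply Rle_trans with (Rabs (dot n x y)); [apply RRle_abs |].
  rewrite <- sqrt_Rsqr_abs; now apply sqrt_le_1_alt.
Qed.

Lemma exists_unit_orthogonal n c :
  (2 <= n)%nat -> exists w, norm2 n w = 1 /\ dot n w c = 0.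
Proof.
  intros Hn.
  assert (Htwo : forall w, (forall i, (2 <= i)%nat -> w i = 0) ->
            norm2 n w = w 0%nat * w 0%nat + w 1%nat * w 1%nat /\
            dot n w c = w 0%nat * c 0%nat + w 1%nat * c 1%nat).
  { intros w Hw; split; apply sumn_two; auto; intros i Hi; rewrite Hw by exact Hi; ring. }
  set (L2 := c 0%nat * c 0%nat + c 1%nat * c 1%nat).
  destruct (Req_dec L2 0) as [HL2 | HL2].
  - set (w := fun i => if Nat.eqb i 0 then 1 else 0); exists w.
    destruct (Htwo w) as [-> ->]; [intros [|i] Hi; [exfalso; lia | reflexivity] |].
    unfold w, L2 in *; simpl; split; nra.
  - set (L := sqrt L2).
    assert (HL : L * L = L2) by (apply sqrt_sqrt; unfold L2; nra).
    assert (0 < L) by (apply sqrt_lt_R0; unfold L2 in *; nra).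
    (* rotation of (c0, c1) by a right angle *)
    set (w := fun i => if Nat.eqb i 0 then c 1%nat / L
                       else if Nat.eqb i 1 then - c 0%nat / L else 0); exists w.
    destruct (Htwo w) as [-> ->]; [intros [|[|i]] Hi; [exfalso; lia .. | reflexivity] |].
    unfold w; simpl; split; [| field; lra].
    transitivity (L2 / (L * L)); [unfold L2; field; lra | rewrite HL; field; lra].
Qed.

Lemma norm2_eq_of_enorm n x r : enorm n x = r -> norm2 n x = r * r.
Proof. intros <-; unfold enorm; rewrite sqrt_sqrt; [reflexivity | apply norm2_ge0]. Qed.

Lemma hdist_origin n p :
  inB n p -> hdist n origin p = arcosh ((1 + norm2 n p) / (1 - norm2 n p)).
Proof.
  unfold inB, hdist; intros Hp.
  rewrite norm2_origin, (norm2_ext n (vsub origin p) (fun i => (-1) * p i + 0 * p i))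
    by (intros; unfold vsub, origin; ring).
  rewrite norm2_lin; f_equal; field; lra.
Qed.

Lemma exp_neg_arcosh_le t : 1 <= t -> exp (- arcosh t) <= / t.
Proof.
  intros Ht; pose proof (sqrt_pos (t * t - 1)).
  unfold arcosh; rewrite exp_Ropp, exp_ln by lra.
  apply Rinv_le_contravar; lra.
Qed.

Lemma exp_neg_hdist_origin_le n p :
  inB n p -> exp (- hdist n origin p) <= 1 - norm2 n p.
Proof.
  intros Hp; rewrite hdist_origin by exact Hp; unfold inB in Hp.
  pose proof (norm2_ge0 n p); set (q := norm2 n p) in *.
  assert (Hquot : (1 + q) / (1 - q) = 1 + 2 * q / (1 - q)) by (field; lra).
  assert (0 <= 2 * q / (1 - q))
    by (apply Rmult_le_pos; [lra | apply Rlt_le, Rinv_0_lt_compat; lra]).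
  eapply Rle_trans; [apply exp_neg_arcosh_le; lra |].
  rewrite Rinv_div; apply Rmult_le_reg_r with (1 + q); [lra |].
  unfold Rdiv; rewrite Rmult_assoc, Rinv_l by lra; nra.
Qed.

Lemma hypersphere_dot n c rho p :
  orth_sphere n c rho -> tg_hypersphere n c rho p -> 1 + norm2 n p = 2 * dot n p c.
Proof.
  intros [_ Hc] [_ Hpc]; apply norm2_eq_of_enorm in Hpc.
  rewrite (norm2_ext n _ (fun i => 1 * p i + (-1) * c i)) in Hpc
    by (intros; unfold vsub; ring).
  rewrite norm2_lin, Hc in Hpc; lra.
Qed.

(* The point of the hypersphere closest to 0 lies at Euclidean distance
   |c| - rho = sqrt (1 + rho^2) - rho < 1 from 0. *)
Lemma exp_neg_hdist_origin_hypersphere_le n c rho p :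
  orth_sphere n c rho -> tg_hypersphere n c rho p -> exp (- hdist n origin p) <= 2 * rho.
Proof.
  intros Horth Hp; pose proof Horth as [Hrho Hc].
  eapply Rle_trans; [apply exp_neg_hdist_origin_le, Hp |].
  pose proof (hypersphere_dot n c rho p Horth Hp) as Hdot.
  pose proof (dot_le_enorm n p c) as Hcs; unfold enorm in Hcs; rewrite Hc in Hcs.
  set (u := sqrt (norm2 n p)) in *; set (C := sqrt (1 + rho ^ 2)) in *.
  assert (Hu : u * u = norm2 n p) by (apply sqrt_sqrt, norm2_ge0).
  assert (HC : C * C = 1 + rho ^ 2) by (apply sqrt_sqrt; nra).
  assert (0 <= u) by apply sqrt_pos; assert (0 <= C) by apply sqrt_pos.
  assert (HCrho : rho < C <= 1 + rho) by (split; nra).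
  assert (Hroot : C - rho <= u) by nra.
  nra.
Qed.

Lemma exp_neg_hdist_to_hypersphere_le n c rho d :
  orth_sphere n c rho -> is_hdist_to_set n (tg_hypersphere n c rho) origin d ->
  exp (- d) <= 2 * rho.
Proof.
  intros Horth [_ Happrox]; pose proof Horth as [Hrho _].
  apply Rnot_lt_le; intros Hlt.
  assert (Hln : ln (2 * rho) < - d) by (rewrite <- (ln_exp (- d)); apply ln_increasing; lra).
  destruct (Happrox (- ln (2 * rho) - d)) as [p [Hp Hdist]]; [lra |].
  pose proof (exp_neg_hdist_origin_hypersphere_le n c rho p Horth Hp) as Hle.
  assert (exp (ln (2 * rho)) < exp (- hdist n origin p)) by (apply exp_increasing; lra).
  rewrite exp_ln in * by lra; lra.
Qed.

Lemma is_sigma_origin n c rho s :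
  is_sigma n c rho origin s -> is_hdist_to_set n (tg_hypersphere n c rho) origin s.
Proof. intros [d [Hd [[_ ->] | [Hne _]]]]; [exact Hd | exfalso; apply Hne; tauto]. Qed.

Lemma enorm_lt_of_norm2_lt n x r : 0 < r -> norm2 n x < r * r -> enorm n x < r.
Proof.
  intros Hr H; rewrite <- (sqrt_square r) by lra.
  apply sqrt_lt_1_alt; split; [apply norm2_ge0 | exact H].
Qed.

Lemma enorm_gt_of_norm2_gt n x r : 0 <= r -> r * r < norm2 n x -> r < enorm n x.
Proof. intros Hr H; rewrite <- (sqrt_square r) by lra; apply sqrt_lt_1_alt; nra. Qed.

Lemma norm2_scale_sub n s y c :
  norm2 n y = 1 ->
  norm2 n (vsub (fun i => s * y i) c) = s * s - 2 * s * dot n y c + norm2 n c.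
Proof.
  intros Hy; rewrite (norm2_ext n _ (fun i => s * y i + (-1) * c i))
    by (intros; unfold vsub; ring).
  rewrite norm2_lin, Hy; ring.
Qed.

Lemma inB_scale_unit n s y : norm2 n y = 1 -> -1 < s < 1 -> inB n (fun i => s * y i).
Proof.
  intros Hy Hs; unfold inB.
  rewrite (norm2_ext n _ (fun i => s * y i + 0 * y i)) by (intros; ring).
  rewrite norm2_lin, Hy; nra.
Qed.

Lemma in_closure_of_radial n (S : pt -> Prop) y e0 :
  norm2 n y = 1 -> 0 < e0 ->
  (forall s, 1 - e0 < s < 1 -> S (fun i => s * y i)) -> in_closure n S y.
Proof.
  intros Hy He0 HS eps Heps.
  set (e := Rmin e0 eps / 2).
  assert (0 < e < e0 /\ e < eps) by (unfold e, Rmin; destruct Rle_dec; lra).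
  exists (fun i => (1 - e) * y i); split; [apply HS; lra |].
  apply enorm_lt_of_norm2_lt; [lra |].
  rewrite (norm2_ext n _ (fun i => (- e) * y i + 0 * y i)) by (intros; unfold vsub; ring).
  rewrite norm2_lin, Hy; nra.
Qed.

Lemma in_closure_inner_hyperball n c rho y :
  orth_sphere n c rho -> norm2 n y = 1 -> 1 < dot n y c ->
  in_closure n (tg_hyperball n c rho true) y.
Proof.
  intros [Hrho Hc] Hy Hyc.
  (* any s > 1 / (y . c) works *)
  apply (in_closure_of_radial n _ y (1 - / dot n y c) Hy).
  { assert (/ dot n y c < 1) by (rewrite <- Rinv_1; apply Rinv_lt_contravar; lra); lra. }
  intros s Hs; assert (0 < s) by (assert (0 < / dot n y c) by (apply Rinv_0_lt_compat; lra); lra).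
  assert (Hsyc : 1 < s * dot n y c).
  { replace 1 with (/ dot n y c * dot n y c) by (field; lra).
    apply Rmult_lt_compat_r; lra. }
  split; [apply inB_scale_unit; [exact Hy | lra] |].
  apply enorm_lt_of_norm2_lt; [lra |]; rewrite norm2_scale_sub, Hc by exact Hy; nra.
Qed.

Lemma in_closure_outer_hyperball n c rho y :
  orth_sphere n c rho -> norm2 n y = 1 -> dot n y c <= 0 ->
  in_closure n (tg_hyperball n c rho false) y.
Proof.
  intros [Hrho Hc] Hy Hyc.
  apply (in_closure_of_radial n _ y 1 Hy); [lra |]; intros s Hs.
  split; [apply inB_scale_unit; [exact Hy | lra] |].
  apply enorm_gt_of_norm2_gt; [lra |]; rewrite norm2_scale_sub, Hc by exact Hy; nra.
Qed.

Definition is_cap_hyperball (n : nat) (z : pt) (theta : R) (c : pt) (rho : R)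
    (inner : bool) : Prop :=
  forall y, onDB n y ->
    (in_closure n (tg_hyperball n c rho inner) y <-> angle n y z <= theta / 2).

(* [acos] is [PI] on [(-oo, -1]], hence the strict bound [phi < PI]. *)
Lemma cos_le_of_acos_le x phi : 0 <= phi < PI -> acos x <= phi -> cos phi <= x.
Proof.
  intros Hphi Hx; pose proof (COS_bound phi).
  destruct (Rle_dec x (-1)) as [Hm | Hm].
  - unfold acos in Hx; destruct (Rle_dec x (-1)); [lra | contradiction].
  - destruct (Rle_dec 1 x) as [Hp | Hp]; [lra |].
    rewrite <- (cos_acos x) by lra; pose proof (acos_bound x).
    apply cos_decr_1; lra.
Qed.

Lemma cos_half_le_dot_of_cap n z theta c rho inner y :
  0 <= theta < 2 * PI -> is_cap_hyperball n z theta c rho inner -> onDB n y ->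
  in_closure n (tg_hyperball n c rho inner) y -> cos (theta / 2) <= dot n y z.
Proof. intros Ht Hcap Hy Hcl; apply cos_le_of_acos_le; [lra | now apply Hcap]. Qed.

(* An outer hyperball would have a unit vector w orthogonal to c and also -w
   in the closure, which cannot both lie in a cap of angle less than PI. *)
Lemma cap_hyperball_inner n z theta c rho inner :
  (2 <= n)%nat -> 0 <= theta < PI -> orth_sphere n c rho ->
  is_cap_hyperball n z theta c rho inner -> inner = true.
Proof.
  intros Hn Ht Horth Hcap; destruct inner; [reflexivity | exfalso].
  destruct (exists_unit_orthogonal n c Hn) as [w [Hw Hwc]].
  set (w' := fun i => (-1) * w i + 0 * w i).
  assert (Hw' : norm2 n w' = 1) by (unfold w'; rewrite norm2_lin, Hw; ring).
  assert (Hw'c : dot n w' c = 0) by (unfold w'; rewrite dot_lin, Hwc; ring).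
  pose proof (cos_half_le_dot_of_cap n z theta c rho false w ltac:(lra) Hcap Hw
    (in_closure_outer_hyperball n c rho w Horth Hw ltac:(lra))).
  pose proof (cos_half_le_dot_of_cap n z theta c rho false w' ltac:(lra) Hcap Hw'
    (in_closure_outer_hyperball n c rho w' Horth Hw' ltac:(lra))) as Hneg.
  unfold w' in Hneg; rewrite dot_lin in Hneg.
  assert (0 < cos (theta / 2)) by (apply cos_gt_0; lra).
  lra.
Qed.

Lemma cap_inner_cos_half_mul_le n z theta c rho :
  (2 <= n)%nat -> onDB n z -> 0 <= theta < PI -> orth_sphere n c rho ->
  is_cap_hyperball n z theta c rho true -> cos (theta / 2) * sqrt (1 + rho ^ 2) <= 1.
Proof.
  intros Hn Hz Ht Horth Hcap; pose proof Horth as [Hrho Hc].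
  set (k := cos (theta / 2)); set (C := sqrt (1 + rho ^ 2)).
  assert (HC : C * C = 1 + rho ^ 2) by (apply sqrt_sqrt; nra).
  assert (0 <= C) by apply sqrt_pos.
  assert (HC1 : 1 < C) by nra.
  assert (Hcz : dot n c z <= C).
  { pose proof (dot_le_enorm n c z) as Hcs; unfold enorm in Hcs.
    rewrite Hc, Hz, sqrt_1 in Hcs; fold C in Hcs; lra. }
  assert (Hk1 : k <= 1) by apply COS_bound.
  destruct (exists_unit_orthogonal n c Hn) as [w [Hw Hwc]].
  apply Rnot_lt_le; intros Hgt.
  (* For 1 / C < a < k, the unit vectors (a / C) c +- b w have dot product
     a C > 1 with c, so they lie in the closure and hence in the cap. *)
  assert (HiC : 0 < / C /\ / C * C = 1) by (split; [apply Rinv_0_lt_compat | field]; lra).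
  set (a := (k + / C) / 2).
  assert (Ha : / C < a < k) by (unfold a; nra).
  set (b := sqrt (1 - a * a)).
  assert (Hb : b * b = 1 - a * a) by (apply sqrt_sqrt; nra).
  assert (Hcap_pt : forall bb, bb * bb = 1 - a * a ->
            k <= a / C * dot n c z + bb * dot n w z).
  { intros bb Hbb.
    assert (Hunit : norm2 n (fun i => a / C * c i + bb * w i) = 1).
    { rewrite norm2_lin, Hc, Hw, (dot_sym n c w), Hwc, <- HC.
      transitivity (a * a + bb * bb); [field | ]; lra. }
    rewrite <- dot_lin; apply (cos_half_le_dot_of_cap n z theta c rho true);
      [lra | exact Hcap | exact Hunit |].
    apply in_closure_inner_hyperball; [exact Horth | exact Hunit |].
    rewrite dot_lin, Hwc; change (dot n c c) with (norm2 n c); rewrite Hc, <- HC.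
    replace (a / C * (C * C) + bb * 0) with (a * C) by (field; lra); nra. }
  pose proof (Hcap_pt b Hb); pose proof (Hcap_pt (- b) ltac:(nra)).
  assert (a / C * dot n c z <= a / C * C)
    by (apply Rmult_le_compat_l; [unfold Rdiv; nra | exact Hcz]).
  replace (a / C * C) with a in * by (field; lra).
  lra.
Qed.

Lemma radius_le_of_cos_half_mul_le theta rho :
  0 < theta < 1 -> 0 <= rho -> cos (theta / 2) * sqrt (1 + rho ^ 2) <= 1 -> rho <= theta.
Proof.
  intros Ht Hrho H.
  assert (Hcos : 1 - theta * theta / 8 <= cos (theta / 2)).
  { pose proof PI2_1; destruct (cos_bound (theta / 2) 0) as [Hlow _]; [lra | lra |].
    unfold cos_approx, cos_term in Hlow; simpl in Hlow; lra. }
  set (C := sqrt (1 + rho ^ 2)) in *.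
  assert (HC : C * C = 1 + rho ^ 2) by (apply sqrt_sqrt; nra).
  assert (0 <= C) by apply sqrt_pos.
  apply Rnot_lt_le; intros Hlt.
  assert (Hsq : (1 + theta * theta) * ((1 - theta * theta / 8) * (1 - theta * theta / 8)) < 1).
  { assert (0 < 1 - theta * theta / 8) by nra.
    assert (Hm : 0 <= (1 - theta * theta / 8) * C <= 1) by nra.
    assert (1 + theta * theta < C * C) by nra.
    assert ((1 - theta * theta / 8) * C * ((1 - theta * theta / 8) * C) <= 1) by nra.
    nra. }
  assert (Hx : 0 < theta * theta < 1) by nra.
  assert (0 < theta * theta * (48 - 15 * (theta * theta))) by nra.
  nra.
Qed.

Lemma cap_radius_le n z theta c rho inner :
  (2 <= n)%nat -> onDB n z -> 0 < theta < 1 -> orth_sphere n c rho ->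
  is_cap_hyperball n z theta c rho inner -> rho <= theta.
Proof.
  intros Hn Hz Ht Horth Hcap; pose proof PI2_1; pose proof Horth as [Hrho _].
  assert (inner = true) as -> by (apply (cap_hyperball_inner n z theta c rho); auto; lra).
  apply radius_le_of_cos_half_mul_le; [lra | lra |].
  apply (cap_inner_cos_half_mul_le n z theta c rho); auto; lra.
Qed.

Lemma exp_neg_mul_le_Rpower a r d x :
  0 <= a <= r -> 0 <= d -> exp (- d) <= x -> exp (- r * d) <= Rpower x a.
Proof.
  intros Har Hd Hx.
  apply Rle_trans with (Rpower (exp (- d)) a);
    [| apply Rle_Rpower_l; [lra | split; [apply exp_pos | exact Hx]]].
  unfold Rpower; rewrite ln_exp.
  assert (Hexp : - r * d <= a * - d) by nra.
  destruct Hexp as [Hlt | ->]; [left; now apply exp_increasing | apply Rle_refl].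
Qed.

Theorem mainTheorem6 :
  forall (n : nat) (lam : R) (h : R -> R) (d0 C3 : R),
  (2 <= n)%nat ->
  0 <= lam <= (INR n - 1) ^ 2 / 4 ->
  0 < d0 ->
  (exists h1 h2 : R -> R, forall d, 0 < d ->
      derivable_pt_lim h d (h1 d) /\ derivable_pt_lim h1 d (h2 d) /\
      h2 d + (INR n - 1) * tanh d * h1 d = - lam * h d) ->
  (forall d, d0 <= d -> 0 < h d) ->
  (forall d e, d0 <= d -> d <= e -> h e <= h d) ->
  (forall d, d0 < d ->
     h d < C3 * exp (- ((INR n - 1) / 2
                        + (INR n - 1) / 2 * sqrt (1 - 4 * lam / (INR n - 1) ^ 2)) * d)) ->
  exists C4 theta1 : R, 0 < C4 /\ 0 < theta1 /\
    forall (z : pt) (theta : R), onDB n z -> 0 < theta < theta1 ->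
    forall (c : pt) (rho : R) (inner : bool),
      orth_sphere n c rho ->
      (forall y, onDB n y ->
         (in_closure n (tg_hyperball n c rho inner) y <-> angle n y z <= theta / 2)) ->
      forall s, is_sigma n c rho origin s ->
        0 < h s / h d0 /\ h s / h d0 <= C4 * Rpower theta ((INR n - 1) / 2).
Proof.
  intros n lam h d0 C3 Hn _ Hd0 _ Hpos _ Hdecay.
  set (a := (INR n - 1) / 2) in *; set (r := a + a * sqrt _) in Hdecay.
  assert (Har : 0 <= a <= r).
  { pose proof (le_INR _ _ Hn); pose proof (sqrt_pos (1 - 4 * lam / (INR n - 1) ^ 2)).
    simpl in *; unfold r, a; nra. }
  assert (HC3 : 0 < C3).
  { pose proof (Hpos (d0 + 1) ltac:(lra)); pose proof (Hdecay (d0 + 1) ltac:(lra)).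
    pose proof (exp_pos (- r * (d0 + 1))); nra. }
  pose proof (Hpos d0 (Rle_refl d0)) as Hhd0; pose proof (exp_pos (- d0)).
  assert (0 < Rpower 2 a) by apply exp_pos.
  exists (C3 * Rpower 2 a / h d0), (Rmin 1 (exp (- d0) / 2)).
  split; [apply Rdiv_lt_0_compat; nra | split; [apply Rmin_glb_lt; lra |]].
  intros z theta Hz Htheta c rho inner Horth Hcap s Hs.
  pose proof (Rmin_l 1 (exp (- d0) / 2)); pose proof (Rmin_r 1 (exp (- d0) / 2)).
  pose proof (cap_radius_le n z theta c rho inner Hn Hz ltac:(lra) Horth Hcap) as Hrho.
  pose proof (exp_neg_hdist_to_hypersphere_le n c rho s Horth (is_sigma_origin n c rho s Hs)).
  assert (Hs0 : d0 < s) by (apply Ropp_lt_cancel, exp_lt_inv; lra).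
  pose proof (Hpos s ltac:(lra)).
  split; [apply Rdiv_lt_0_compat; lra |].
  pose proof (exp_neg_mul_le_Rpower a r s (2 * theta) Har ltac:(lra) ltac:(lra)) as Hpow.
  rewrite <- Rpower_mult_distr in Hpow by lra.
  assert (Hhs : h s <= C3 * Rpower 2 a * Rpower theta a).
  { pose proof (Hdecay s Hs0); pose proof (Rmult_le_compat_l C3 _ _ (Rlt_le _ _ HC3) Hpow).
    lra. }
  replace (C3 * Rpower 2 a / h d0 * Rpower theta a)
    with (C3 * Rpower 2 a * Rpower theta a / h d0) by (field; lra).
  unfold Rdiv; apply Rmult_le_compat_r; [apply Rlt_le, Rinv_0_lt_compat; lra | exact Hhs].
Qed.
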